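(* Consider a system with a finite set $S$ of tasks, periods $\tau_X$, frame length $T=\mathrm{lcm}\{\tau_X : X\in S\}$ and per-execution rewards $r^1_X\ge r^2_X\ge\dots\ge r^{\tau_X}_X\ge 0$ (as in the context). Let $n=(n^i_X)_{X\in S,\,1\le i\le\tau_X}$ be a vector of integers satisfying $0\le n^i_X\le T/\tau_X$ for all $X\in S$, $1\le i\le \tau_X$, and $\sum_{X\in S}\sum_{i=1}^{\tau_X} n^i_X\le T$. Then there exists a scheduling policy under which the average reward of every task $X\in S$ satisfies $q_X\ge\sum_{i=1}^{\tau_X} n^i_X r^i_X$.
   Context: A system consists of a finite set $S$ of tasks. Time is slotted, $t\in\{0,1,2,\dots\}$. Each task $X\in S$ has a period $\tau_X$ (a positive integer); time is partitioned into consecutive periods of $X$ of $\tau_X$ slots each, the first starting at $t=0$. In each period, task $X$ has one job, which is removed from the system at the end of that period. Let $T$ be the least common multiple of $\{\tau_X : X\in S\}$; time is partitioned into consecutive frames of $T$ slots each, the first starting at $t=0$. A scheduling policy chooses in each time slot either to idle or to execute the job of exactly one task; a job may be executed in any number of slots within its period. Each task $X$ has rewards $r^1_X\ge r^2_X\ge\dots\ge r^{\tau_X}_X\ge 0$: when the job of $X$ is executed for the $i$-th time within a period, $X$ obtains reward $r^i_X$. Let $s_X(t)$ be the total reward obtained by $X$ between time $0$ and time $t$; the average reward of $X$ is $q_X=\liminf_{t\to\infty} s_X(t)/(t/T)$. *)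

From mathcomp Require Import all_boot all_order all_algebra.
From mathcomp Require Import all_classical all_reals all_analysis.
Set Implicit Arguments. Unset Strict Implicit. Unset Printing Implicit Defensive.
Import Order.TTheory GRing.Theory Num.Theory.
Local Open Scope ring_scope.

Definition frame (S : finType) (tau : S -> nat) : nat :=
  \big[lcmn/1%N]_(X : S) tau X.

(* A (deterministic) scheduling policy: in slot t, [None] = idle,
   [Some X] = execute the job of task X. *)
Definition policy (S : finType) := nat -> option S.

Definition exec_count (S : finType) (tau : S -> nat) (p : policy S) (X : S) (t : nat) : nat :=
  \sum_((t %/ tau X) * tau X <= u < t.+1) (p u == Some X).

Definition slot_reward (R : realType) (S : finType) (tau : S -> nat)
  (r : S -> nat -> R) (p : policy S) (X : S) (t : nat) : R :=
  if p t == Some X then r X (exec_count tau p X t) else 0.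

Definition total_reward (R : realType) (S : finType) (tau : S -> nat)
  (r : S -> nat -> R) (p : policy S) (X : S) (t : nat) : R :=
  \sum_(0 <= u < t) slot_reward tau r p X u.

Definition avg_reward (R : realType) (S : finType) (tau : S -> nat)
  (r : S -> nat -> R) (p : policy S) (X : S) : \bar R :=
  limn_einf (fun t : nat => (total_reward tau r p X t / (t%:R / (frame tau)%:R))%:E).

From Pilot Require Import Defs.
From mathcomp Require Import all_boot all_order all_algebra.
From mathcomp Require Import all_classical all_reals all_analysis.
(* Give finset's set0, subsetP, ... precedence over the homonymous classical-set names. *)
From mathcomp Require Import fintype finset.
From mathcomp Require Import zify ring lra.
Set Implicit Arguments. Unset Strict Implicit. Unset Printing Implicit Defensive.
Import Order.TTheory GRing.Theory Num.Theory.

(* Let P_X = T / tau_X be the number of periods of X in a frame and write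
   sum_i n^i_X = q_X P_X + e_X with e_X < P_X. As every n^i_X is at most P_X and
   the rewards are nonincreasing, the target is at most the reward X earns when it
   is executed q_X times in each of its periods and q_X + 1 times in e_X of them.
   A frame schedule with this property exists by Hall's marriage theorem: the
   executions are matched to slots of their period, except that the optional
   (q_X + 1)-th one may instead take one of P_X - e_X dummies, and Hall's condition
   follows by weighting every task with its share (q_X P_X + e_X) / T of the frame.
   Repeating the frame schedule, the average reward is at least that of one frame. *)

(** * Hall's marriage theorem *)

Section HallMarriage.

Variables (L R : finType) (y0 : R).
Implicit Types (adj : L -> R -> bool) (A B C : {set L}).

Definition neighbours adj B : {set R} := [set y | [exists x in B, adj x y]].

Definition hall_condition adj A :=
  forall B, B \subset A -> #|B| <= #|neighbours adj B|.

Definition matching adj A (f : L -> R) :=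
  {in A &, injective f} /\ {in A, forall x, adj x (f x)}.

Lemma mem_neighbours adj B x y : x \in B -> adj x y -> y \in neighbours adj B.
Proof. by move=> xB a; rewrite inE; apply/existsP; exists x; rewrite xB. Qed.

Lemma neighboursU adj B C :
  neighbours adj (B :|: C) = neighbours adj B :|: neighbours adj C.
Proof.
apply/setP=> y; rewrite !inE; apply/existsP/orP => [[x]|[]/existsP[x /andP[xi a]]].
  by rewrite inE => /andP[/orP[] xi a]; [left|right]; apply/existsP; exists x; rewrite xi.
all: by exists x; rewrite inE xi ?orbT.
Qed.

Lemma neighbours_avoid adj (Y : {set R}) B :
  neighbours (fun x y => adj x y && (y \notin Y)) B = neighbours adj B :\: Y.
Proof.
apply/setP=> y; rewrite !inE; apply/existsP/andP => [[x /and3P[xB a yY]]|[yY /existsP[x /andP[xB a]]]].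
  by split=> //; apply/existsP; exists x; rewrite xB.
by exists x; rewrite xB a.
Qed.

Lemma matchingW adj adj' A f :
  (forall x y, adj' x y -> adj x y) -> matching adj' A f -> matching adj A f.
Proof. by move=> sub [fi fa]; split=> // x /fa/sub. Qed.

Lemma matchingU adj A1 A2 f1 f2 :
  matching adj A1 f1 -> matching adj A2 f2 -> {in A1 & A2, forall x y, f1 x != f2 y} ->
  matching adj (A1 :|: A2) (fun x => if x \in A1 then f1 x else f2 x).
Proof.
move=> [i1 a1] [i2 a2] disj; split => [x y|x]; last first.
  by rewrite inE; case: ifP => [xA1 _|_ /= xA2]; [apply: a1|apply: a2].
rewrite !inE; case: ifP => xA1; case: ifP => yA1 //= xA yA.
- exact: i1.
- by move=> e; move: (disj x y xA1 yA); rewrite e eqxx.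
- by move=> e; move: (disj y x yA1 xA); rewrite e eqxx.
- exact: i2.
Qed.

Section InductionStep.

Variable n : nat.
Hypothesis IH : forall adj A, #|A| <= n -> hall_condition adj A -> exists f, matching adj A f.

(* B is matched onto its neighbourhood, which it fills, and A :\: B into the rest:
   Hall's condition for C :|: B yields it for C in A :\: B. *)
Lemma hall_step_critical adj A B : #|A| <= n.+1 -> hall_condition adj A ->
  B \proper A -> B != set0 -> #|neighbours adj B| <= #|B| -> exists f, matching adj A f.
Proof.
move=> cardA hallA BA B0 tight; have sBA := proper_sub BA.
have [f1 m1] : exists f, matching adj B f.
  apply: IH => [|C CB]; last exact/hallA/(subset_trans CB).
  by rewrite -ltnS (leq_trans (proper_card BA)).
pose adj2 x y := adj x y && (y \notin neighbours adj B).
have [f2 m2] : exists f, matching adj2 (A :\: B) f.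
  apply: IH => [|C CAB].
    have := cardsD A B; rewrite (setIidPr sBA); have := card_gt0 B; rewrite B0; lia.
  have dCB : C :&: B = set0.
    apply/setP=> z; rewrite !inE; apply/andP=> -[zC zB].
    by move/subsetP: CAB => /(_ z zC); rewrite inE zB.
  have := hallA (C :|: B); rewrite subUset sBA (subset_trans CAB) ?subsetDl //.
  rewrite neighboursU cardsU dCB cards0 subn0 neighbours_avoid => /(_ isT).
  have := cardsID (neighbours adj B) (neighbours adj C).
  have := cardsU (neighbours adj C) (neighbours adj B); rewrite setIC; lia.
have -> : A = B :|: (A :\: B) by rewrite -{1}(setID A B) (setIidPr sBA).
exists (fun x => if x \in B then f1 x else f2 x); apply: matchingU => //.
  by apply: matchingW m2 => x y /andP[].
move=> x y xB yAB; apply/eqP=> e; have := m2.2 y yAB.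
by rewrite /adj2 -e (mem_neighbours xB (m1.2 x xB)) andbF.
Qed.

(* If every nonempty proper subset has a surplus, any edge x--y can be used and
   Hall's condition survives on A minus x with y removed. *)
Lemma hall_step_surplus adj A : #|A| <= n.+1 -> hall_condition adj A ->
  (forall B, B \proper A -> B != set0 -> #|B| < #|neighbours adj B|) ->
  exists f, matching adj A f.
Proof.
move=> cardA hallA surplus.
have [->|/set0Pn[x xA]] := eqVneq A set0.
  by exists (fun=> y0); split=> z; rewrite inE.
have : 0 < #|neighbours adj [set x]| by rewrite (leq_trans _ (hallA _ _)) ?cards1 ?sub1set.
rewrite card_gt0 => /set0Pn[y]; rewrite inE => /existsP[_ /andP[/set1P -> axy]].
pose adj2 z w := adj z w && (w \notin [set y]).
have [f2 m2] : exists f, matching adj2 (A :\ x) f.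
  apply: IH => [|C CAx]; first by move: cardA; rewrite (cardsD1 x A) xA.
  have [->|C0] := eqVneq C set0; first by rewrite cards0.
  have CA : C \proper A.
    rewrite properEneq (subset_trans CAx) ?subsetDl // andbT.
    by apply/eqP=> e; move/subsetP: CAx => /(_ x); rewrite e xA !inE eqxx => /(_ isT).
  rewrite neighbours_avoid; have := surplus C CA C0.
  have := cardsD1 y (neighbours adj C); case: (y \in _) => /=; lia.
have -> : A = [set x] :|: (A :\ x) by rewrite setD1K.
exists (fun z => if z \in [set x] then y else f2 z); apply: matchingU => //.
- by split=> [z w /set1P -> /set1P ->|z /set1P ->].
- by apply: matchingW m2 => z w /andP[].
- move=> z w _ wAx; apply/eqP=> e; have := m2.2 w wAx.
  by rewrite /adj2 -e set11 andbF.
Qed.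

End InductionStep.

Theorem hall_marriage adj A : hall_condition adj A -> exists f, matching adj A f.
Proof.
move: {2}#|A| (leqnn #|A|) => n; elim: n adj A => [|n IH] adj A cardA hallA.
  have -> : A = set0 by apply/eqP; rewrite -cards_eq0 -leqn0.
  by exists (fun=> y0); split=> x; rewrite inE.
have [/existsP[B /and3P[BA B0 tight]]|] :=
  boolP [exists B : {set L}, [&& B \proper A, B != set0 & #|neighbours adj B| <= #|B|]].
  exact: (hall_step_critical IH cardA hallA BA B0 tight).
move/existsPn=> loose; apply: (hall_step_surplus IH cardA hallA) => B BA B0.
by move: (loose B); rewrite BA B0 /= -ltnNge.
Qed.

End HallMarriage.

(** * A frame schedule from a matching *)

Lemma card_sum_mem (T : finType) (A : {pred T}) : #|A| = \sum_x (x \in A).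
Proof. by rewrite -sum1_card big_mkcond /=; apply: eq_bigr => x _; case: (x \in A). Qed.

Lemma card_set_sumType (A B : finType) (Z : {set A + B}) :
  #|Z| = #|[set a | inl a \in Z]| + #|[set b | inr b \in Z]|.
Proof. by rewrite !card_sum_mem big_sumType; congr (_ + _); apply: eq_bigr => x _; rewrite inE. Qed.

Lemma sum_pair (I J : finType) (F : I * J -> nat) :
  \sum_x F x = \sum_(i : I) \sum_(j : J) F (i, j).
Proof. by rewrite pair_big; apply: eq_bigr => -[]. Qed.

Lemma card_ord_range_cond (N a b : nat) (Q : nat -> bool) : b <= N.+1 ->
  #|[set o : 'I_N.+1 | (a <= o < b) && Q o]| = \sum_(a <= o < b) Q o.
Proof.
move=> bN; rewrite card_sum_mem (big_nat_widenl _ 0) // (big_nat_widen _ _ N.+1) // big_mkord.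
rewrite [RHS]big_mkcond; apply: eq_bigr => i _; rewrite inE /=.
by case: (Q i) (a <= i) (i < b) => [] [] [].
Qed.

Lemma card_ord_ltn_cond (N m : nat) (Q : nat -> bool) : m <= N.+1 ->
  #|[set o : 'I_N.+1 | (o < m) && Q o]| = \sum_(0 <= o < m) Q o.
Proof. exact: (@card_ord_range_cond N 0 m Q). Qed.

Lemma card_ord_ltn (N m : nat) : m <= N.+1 -> #|[set o : 'I_N.+1 | o < m]| = m.
Proof.
move=> mN; transitivity #|[set o : 'I_N.+1 | (o < m) && true]|.
  by apply: eq_card => o; rewrite !inE andbT.
by rewrite (card_ord_ltn_cond (fun=> true)) // sum_nat_const_nat subn0 muln1.
Qed.

Lemma sum_ord_ltn (N m : nat) : m <= N.+1 -> \sum_(o < N.+1) (o < m) = m.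
Proof. by move=> mN; rewrite -[RHS](card_ord_ltn mN) card_sum_mem; apply: eq_bigr => o _; rewrite inE. Qed.

Lemma sum_divn (F : nat -> nat) (d m : nat) : 0 < d ->
  \sum_(0 <= t < m * d) F (t %/ d) = d * \sum_(0 <= k < m) F k.
Proof.
move=> d_gt0; elim: m => [|m IH]; first by rewrite mul0n !big_geq // muln0.
rewrite big_nat_recr //= mulnDr -IH mulSnr (big_cat_nat _ (leq_addr _ _)) //=.
congr (_ + _); rewrite -{1}[m * d]add0n big_addn addKn.
rewrite (eq_big_nat _ _ (F2 := fun=> F m)) ?sum_nat_const_nat ?subn0 1?mulnC //.
by move=> i /andP[_ id]; rewrite addnC mulnC divnMDl // divn_small // addn0.
Qed.

(* c (q + h) <= (c / P) (q P + e) + h (P - e), scaled by T = P * tau: the share of the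
   frame a task claims bounds the executions of c of its periods, h optional ones among them. *)
Lemma scaled_demand_le (c q P e tau : nat) (h : bool) : c <= P -> e < P ->
  c * (q + h) * (P * tau) <= c * tau * (q * P + e) + h * (P - e) * (P * tau).
Proof.
move=> cP eP; case: h => /=; last by nia.
have : c * (P - e) * tau <= P * (P - e) * tau by rewrite !leq_mul2r cP !orbT.
have : P - e + e = P by rewrite subnK // ltnW.
nia.
Qed.

Section DemandGraph.

Variables (S : finType) (T : nat) (tau P q e : S -> nat).
Hypothesis tau_gt0 : forall X, 0 < tau X.
Hypothesis P_tau : forall X, P X * tau X = T.
Hypothesis e_lt_P : forall X, e X < P X.
Hypothesis demand_le : \sum_X (q X * P X + e X) <= T.

Local Notation execution := (S * 'I_T.+1 * 'I_T.+1)%type.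
Local Notation resource := ('I_T.+1 + S * 'I_T.+1)%type.

Lemma P_le_T X : P X <= T.
Proof. by rewrite -(P_tau X) leq_pmulr. Qed.

Lemma q_le_T X : q X <= T.
Proof. by apply: leq_trans demand_le; rewrite (bigD1 X) //=; have := e_lt_P X; nia. Qed.

(* (X, k, j) is the j-th execution of task X in the k-th of its P X periods of a
   frame; the last one, j = q X, is optional: it may be assigned a slot of period
   k or one of the P X - e X dummies inr (X, _), so at least e X periods get it. *)
Definition demand : {set execution} :=
  [set u : execution | (u.1.2 < P u.1.1) && (u.2 <= q u.1.1)].

Definition serves (u : execution) (y : resource) : bool :=
  match y with
  | inl t => (t < T) && (t %/ tau u.1.1 == u.1.2)
  | inr d => [&& u.2 == q u.1.1 :> nat, d.1 == u.1.1 & d.2 < P u.1.1 - e u.1.1]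
  end.

Section HallCondition.

Variable B : {set execution}.
Hypothesis B_demand : B \subset demand.

Definition hits X (k : nat) := [exists u : execution in B, (u.1.1 == X) && (u.1.2 == k :> nat)].
Definition hits_optional X := [exists u : execution in B, (u.1.1 == X) && (u.2 == q X :> nat)].
Definition periods_hit X := \sum_(0 <= k < P X) hits X k.

Lemma demand_of_mem u : u \in B -> (u.1.2 < P u.1.1) && (u.2 <= q u.1.1).
Proof. by move=> uB; move/subsetP: B_demand => /(_ u uB); rewrite inE. Qed.

Lemma periods_hit_le X : periods_hit X <= P X.
Proof.
apply: (@leq_trans (\sum_(0 <= k < P X) 1)); last by rewrite sum_nat_const_nat subn0 muln1.
by apply: leq_sum => k _; case: (hits X k).
Qed.

Lemma card_period_le X (k : 'I_T.+1) :
  \sum_(j : 'I_T.+1) ((X, k, j) \in B) <= hits X k * (q X + hits_optional X).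
Proof.
case hk: (hits X k); last first.
  rewrite big1 // => j _; apply/eqP; rewrite eqb0; apply/negP => xB.
  by move/negbT/existsP: hk; apply; exists (X, k, j); rewrite xB /= !eqxx.
rewrite mul1n -(@sum_ord_ltn T (q X + hits_optional X)); last first.
  by have := q_le_T X; case: (hits_optional X) => /=; lia.
apply: leq_sum => j _; case uB: ((X, k, j) \in B) => //.
have /andP[_ jq] := demand_of_mem uB; rewrite /= in jq.
case: (ltngtP j (q X)) => [jq'|jq'|jq']; first by rewrite ltn_addr.
  by move: jq; rewrite leqNgt jq'.
have -> : hits_optional X by apply/existsP; exists (X, k, j); rewrite uB /= eqxx jq' eqxx.
by rewrite addn1 jq' ltnSn.
Qed.

Lemma card_demand_subset_le : #|B| <= \sum_X periods_hit X * (q X + hits_optional X).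
Proof.
rewrite card_sum_mem sum_pair (sum_pair (fun xk => \sum_(j : 'I_T.+1) ((xk, j) \in B))).
apply: leq_sum => X _.
apply: leq_trans; first by apply: leq_sum => k _; apply: card_period_le.
rewrite -big_distrl leq_mul2r /periods_hit big_mkord.
rewrite (big_ord_widen T.+1 (fun k => nat_of_bool (hits X k))) ?(leqW (P_le_T X)) //.
rewrite [leqRHS]big_mkcond /=; apply/orP; right; apply: leq_sum => k _.
case: ifP => // /negbT; rewrite -leqNgt => Pk.
case hk : (hits X k) => //; move/existsP: hk => [u /andP[uB /andP[/eqP uX /eqP uk]]].
by have /andP[] := demand_of_mem uB; rewrite uX uk ltnNge Pk.
Qed.

Lemma slot_neighbours_ge X :
  tau X * periods_hit X <= #|[set t | inl t \in neighbours serves B]|.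
Proof.
have <- : #|[set t : 'I_T.+1 | (t < T) && hits X (t %/ tau X)]| = tau X * periods_hit X.
  rewrite (card_ord_ltn_cond (fun t => hits X (t %/ tau X))) //.
  by have := sum_divn (hits X) (P X) (tau_gt0 X); rewrite P_tau.
apply: subset_leq_card; apply/subsetP => t; rewrite inE => /andP[tT].
case/existsP => u /andP[uB /andP[/eqP uX /eqP uk]].
by rewrite inE (mem_neighbours uB) //= tT uX uk eqxx.
Qed.

Lemma dummy_neighbours_ge :
  \sum_X hits_optional X * (P X - e X) <= #|[set d | inr d \in neighbours serves B]|.
Proof.
rewrite card_sum_mem sum_pair; apply: leq_sum => X _.
case hX : (hits_optional X); last by rewrite mul0n.
rewrite mul1n -(@sum_ord_ltn T (P X - e X)); last by rewrite leqW // (leq_trans (leq_subr _ _) (P_le_T X)).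
apply: leq_sum => o _; case oP: (o < P X - e X) => //=.
case/existsP: hX => u /andP[uB /andP[/eqP uX /eqP uq]].
by rewrite inE (mem_neighbours uB) //= uq uX !eqxx oP.
Qed.

End HallCondition.

Lemma demand_hall_condition : hall_condition serves demand.
Proof.
move=> B BD; have [T0|T_gt0] := posnP T.
  suff -> : B = set0 by rewrite cards0.
  apply/setP => u; rewrite inE; apply/negbTE/negP => uB.
  by have /andP[+ _] := demand_of_mem BD uB; have := P_le_T u.1.1; lia.
rewrite card_set_sumType; apply: (leq_trans (card_demand_subset_le BD)).
rewrite -(leq_pmul2r T_gt0) big_distrl /= mulnDl.
apply: (@leq_trans (\sum_X (periods_hit B X * tau X * (q X * P X + e X)
                            + hits_optional B X * (P X - e X) * (P X * tau X)))).
  by apply: leq_sum => X _; rewrite -(P_tau X) scaled_demand_le ?periods_hit_le.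
rewrite big_split /=; apply: leq_add.
  apply: (@leq_trans (\sum_X #|[set t | inl t \in neighbours serves B]| * (q X * P X + e X))).
    by apply: leq_sum => X _; rewrite leq_mul2r (mulnC (periods_hit B X)) (slot_neighbours_ge B) orbT.
  by rewrite -big_distrr leq_mul2l demand_le orbT.
under eq_bigr => X _ do rewrite P_tau.
by rewrite -big_distrl leq_mul2r (dummy_neighbours_ge B) orbT.
Qed.

Definition is_slot (y : resource) : bool := if y is inl _ then true else false.

Section MatchedSchedule.

Variable f : execution -> resource.
Hypothesis f_matching : matching serves demand f.

Definition matched_task (t : nat) : option S :=
  if [pick u in demand | f u == inl (inord t)] is Some u then Some u.1.1 else None.

Definition optional_slot X (k : nat) : bool := is_slot (f (X, inord k, inord (q X))).

Lemma matched_taskE u (t : 'I_T.+1) : u \in demand -> f u = inl t -> matched_task t = Some u.1.1.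
Proof.
move=> uD fu; rewrite /matched_task inord_val.
case: pickP => [v /andP[vD /eqP fv]|/(_ u)]; last by rewrite uD fu eqxx.
by rewrite (f_matching.1 _ _ vD uD) // fv fu.
Qed.

Section Period.

Variables (X : S) (k : nat).
Hypothesis k_lt_P : k < P X.

Definition slot_matched : {set execution} :=
  [set u in demand | [&& u.1.1 == X, u.1.2 == k :> nat & is_slot (f u)]].

Lemma card_slot_matched_le :
  #|slot_matched| <= \sum_(k * tau X <= t < k * tau X + tau X) (matched_task t == Some X).
Proof.
have kTX : k * tau X + tau X <= T.+1 by rewrite leqW // -mulSnr -(P_tau X) leq_mul2r k_lt_P orbT.
have fU : {in slot_matched &, injective f}.
  by apply: sub_in2 f_matching.1 => u; rewrite inE => /andP[].
rewrite -(@card_ord_range_cond T) // -(card_in_imset fU) -(card_imset _ (@inl_inj 'I_T.+1 (S * 'I_T.+1))).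
apply: subset_leq_card; apply/subsetP => _ /imsetP[u uU ->].
move: uU; rewrite inE => /andP[uD /and3P[/eqP uX /eqP uk]].
have := f_matching.2 u uD; rewrite /is_slot; case fu : (f u) => [t|//] /andP[tT /eqP tk] _.
apply/imsetP; exists t => //; rewrite inE (matched_taskE uD fu) uX eqxx andbT.
by rewrite -uk -tk uX leq_divM /= -mulSnr ltn_ceil.
Qed.

Lemma card_slot_matched_ge : q X + optional_slot X k <= #|slot_matched|.
Proof.
have kT : k < T.+1 by rewrite ltnS (leq_trans (ltnW k_lt_P) (P_le_T X)).
have qT : q X < T.+1 by rewrite ltnS q_le_T.
have q_opt_le : q X + optional_slot X k <= (q X).+1 by case: optional_slot; rewrite ?addn1 ?addn0.
rewrite -[leqLHS](@card_ord_ltn T); last exact: leq_trans q_opt_le qT.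
rewrite -(@card_imset _ _ (fun j : 'I_T.+1 => (X, inord k : 'I_T.+1, j))); last by move=> j1 j2 [].
apply: subset_leq_card; apply/subsetP => _ /imsetP[j + ->]; rewrite inE => jq.
have uD : (X, inord k, j) \in demand by rewrite inE /= inordK // k_lt_P -ltnS (leq_trans jq).
rewrite inE uD /= inordK // !eqxx /=.
case: (ltngtP j (q X)) => [j_lt|j_gt|j_eq].
- by have := f_matching.2 _ uD; case: (f _) => // d /=; rewrite (ltn_eqF j_lt).
- by move: (leq_trans jq q_opt_le); rewrite ltnS leqNgt j_gt.
- move: jq; rewrite /optional_slot.
  have -> : inord (q X) = j by apply: val_inj; rewrite /= inordK.
  by case: (is_slot _); rewrite ?addn0 j_eq ?ltnn.
Qed.

Lemma matched_execs_ge :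
  q X + optional_slot X k <= \sum_(k * tau X <= t < k * tau X + tau X) (matched_task t == Some X).
Proof. exact: leq_trans card_slot_matched_ge card_slot_matched_le. Qed.

End Period.

Lemma optional_slots_ge X : e X <= \sum_(0 <= k < P X) optional_slot X k.
Proof.
have qT : q X < T.+1 by rewrite ltnS q_le_T.
have split_P : \sum_(0 <= k < P X) optional_slot X k + \sum_(0 <= k < P X) ~~ optional_slot X k = P X.
  rewrite -big_split /= (eq_bigr (fun=> 1)); first by rewrite sum_nat_const_nat subn0 muln1.
  by move=> k _; case: optional_slot.
suff : \sum_(0 <= k < P X) ~~ optional_slot X k <= P X - e X by have := e_lt_P X; lia.
rewrite -(@card_ord_ltn_cond T _ (fun k => ~~ optional_slot X k)) ?leqW ?P_le_T //.
rewrite -[leqRHS](@card_ord_ltn T) ?leqW ?(leq_trans (leq_subr _ _) (P_le_T X)) //.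
pose top (k : 'I_T.+1) : execution := (X, k, inord (q X)).
have topD (k : 'I_T.+1) : k < P X -> top k \in demand.
  by move=> kP; rewrite inE /= inordK ?q_le_T // kP leqnn.
pose dummy (k : 'I_T.+1) : 'I_T.+1 := if f (top k) is inr d then d.2 else ord0.
have dummyP (k : 'I_T.+1) : k \in [set k : 'I_T.+1 | (k < P X) && ~~ optional_slot X k] ->
    exists2 d, f (top k) = inr d & d.1 = X /\ d.2 < P X - e X.
  rewrite inE => /andP[kP]; rewrite /optional_slot inord_val -/(top k).
  case fk : (f (top k)) => [//|d] _; exists d => //.
  by have := f_matching.2 _ (topD k kP); rewrite fk /= => /and3P[_ /eqP -> ->].
rewrite -(@card_in_imset _ _ dummy).
  apply: subset_leq_card; apply/subsetP => _ /imsetP[k /dummyP[d fk [_ dP]] ->].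
  by rewrite inE /dummy fk.
move=> k1 k2 /[dup] k1K /dummyP[d1 f1 [d1X _]] /[dup] k2K /dummyP[d2 f2 [d2X _]].
rewrite /dummy f1 f2 => d12; suff : top k1 = top k2 by case.
move: k1K k2K; rewrite !inE => /andP[k1P _] /andP[k2P _].
apply: f_matching.1; rewrite ?topD // f1 f2; congr inr.
by move: d1 d2 d1X d2X d12 {f1 f2} => [? ?] [? ?] /= -> -> ->.
Qed.

End MatchedSchedule.

End DemandGraph.

(** * Rewards of periodic policies *)

Local Open Scope ring_scope.

Lemma liminf_ratio_ge (R : realType) (T : nat) (s : nat -> R) (F : R) : (0 < T)%N -> 0 <= F ->
  (forall t, (t %/ T)%:R * F <= s t) ->
  (F%:E <= limn_einf (fun t : nat => (s t / (t%:R / T%:R))%:E))%E.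
Proof.
move=> T0 F0 hs; apply/lee_mul01Pr; first by rewrite lee_fin.
move=> r /andP[r0 r1]; rewrite limn_einf_lim; apply: lime_ge; first exact: is_cvg_einfs.
pose N := (Num.truncn (1 / (1 - r))).+1.
have hN : 1 / (1 - r) < N%:R by apply: truncnS_gt.
near=> n; apply: le_ereal_inf_tmp => _ [t /= nt <-].
have tN : (N * T <= t)%N by apply: leq_trans nt; near: n; exists (N * T)%N.
set m := (t %/ T)%N.
have mN : (N <= m)%N by rewrite /m leq_divRL.
have tm : t%:R < (m.+1)%:R * T%:R :> R by rewrite -natrM ltr_nat ltn_ceil.
have mNR : N%:R <= m%:R :> R by rewrite ler_nat.
have Tpos : (0 : R) < T%:R by rewrite ltr0n.
have tpos : (0 : R) < t%:R by rewrite ltr0n; apply: leq_trans tN; rewrite muln_gt0 T0.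
rewrite -EFinM lee_fin ler_pdivlMr ?divr_gt0 //.
have m_ge : 1 <= m%:R * (1 - r).
  have : 1 / (1 - r) * (1 - r) = 1 by field; lra.
  nra.
have rt_le : r * (t%:R / T%:R) <= m%:R by rewrite mulrA ler_pdivrMr //; nra.
apply: le_trans (hs t).
have -> : r * F * (t%:R / T%:R) = F * (r * (t%:R / T%:R)) by ring.
by rewrite [m%:R * F]mulrC; apply: ler_wpM2l.
Unshelve. all: by end_near. Qed.

Lemma sum_at_ranks (V : nmodType) (F : nat -> V) (b : nat -> bool) (a m : nat) :
  \sum_(a <= u < a + m) (if b u then F (\sum_(a <= v < u.+1) b v)%N else 0) =
  \sum_(1 <= i < (\sum_(a <= v < a + m) b v)%N.+1) F i.
Proof.
elim: m => [|m IH]; first by rewrite addn0 !big_geq.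
rewrite addnS big_nat_recr ?leq_addr //= IH.
rewrite [in X in _ = X](big_nat_recr _ _ _ (leq_addr m a)) /=.
rewrite (big_nat_recr _ _ _ (leq_addr m a)) /=.
by case: (b (a + m)); rewrite ?addr0 ?addn0 // addn1 [in RHS]big_nat_recr.
Qed.

Definition period_reward (R : realType) (r : nat -> R) (c : nat) : R := \sum_(1 <= i < c.+1) r i.

Section PolicyRewards.

Variables (R : realType) (S : finType) (tau : S -> nat) (r : S -> nat -> R) (p : policy S) (X : S).
Hypothesis tau_gt0 : (0 < tau X)%N.

Local Notation slot_reward := (slot_reward tau r p X).
Local Notation total_reward := (total_reward tau r p X).

Definition period_execs (K : nat) : nat :=
  \sum_(K * tau X <= v < K * tau X + tau X) (p v == Some X).

Lemma period_execs_le K : (period_execs K <= tau X)%N.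
Proof.
apply: (@leq_trans (\sum_(K * tau X <= v < K * tau X + tau X) 1)%N).
  by apply: leq_sum => v _; case: (_ == _).
by rewrite sum_nat_const_nat muln1 addKn.
Qed.

Lemma total_reward_periods K :
  total_reward (K * tau X)%N = \sum_(0 <= k < K) period_reward (r X) (period_execs k).
Proof.
elim: K => [|K IH]; first by rewrite /total_reward mul0n !big_geq.
rewrite big_nat_recr //= -IH /total_reward mulSnr (big_cat_nat _ (leq_addr _ _)) //=.
congr (_ + _); rewrite /period_reward /period_execs -sum_at_ranks.
apply: eq_big_nat => u /andP[Ku uK]; rewrite /Defs.slot_reward /exec_count.
suff -> : (u %/ tau X = K)%N by [].
by rewrite -(subnKC Ku) divnMDl // divn_small ?addn0 //; lia.
Qed.

Hypothesis r_ge0 : forall i, (1 <= i <= tau X)%N -> 0 <= r X i.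

Lemma exec_count_le u : (exec_count tau p X u <= tau X)%N.
Proof.
set a := (u %/ tau X * tau X)%N.
have ut : (u < a + tau X)%N by rewrite /a -mulSnr ltn_ceil.
apply: (@leq_trans (\sum_(a <= v < u.+1) 1)%N); first by apply: leq_sum => v _; case: (_ == _).
by rewrite sum_nat_const_nat muln1; lia.
Qed.

Lemma slot_reward_ge0 u : 0 <= slot_reward u.
Proof.
rewrite /Defs.slot_reward; case: ifP => // pu; apply: r_ge0; rewrite exec_count_le andbT.
by rewrite /exec_count big_nat_recr ?leq_divM //= pu addn1.
Qed.

Lemma total_reward_ge0 t : 0 <= total_reward t.
Proof. by apply: sumr_ge0 => u _; apply: slot_reward_ge0. Qed.

Lemma total_reward_le t t' : (t <= t')%N -> total_reward t <= total_reward t'.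
Proof.
move=> tt'; rewrite /total_reward [leRHS](big_cat_nat _ tt') //= lerDl.
by apply: sumr_ge0 => u _; apply: slot_reward_ge0.
Qed.

Variable T : nat.
Hypothesis tau_dvd_T : (tau X %| T)%N.
Hypothesis p_periodic : forall u, p (u + T)%N = p u.

Lemma slot_reward_shift u : slot_reward (u + T)%N = slot_reward u.
Proof.
rewrite /Defs.slot_reward p_periodic /exec_count divnDr // mulnDl (divnK tau_dvd_T).
rewrite big_addn -addSn addnK.
by under eq_bigr do rewrite p_periodic.
Qed.

Lemma total_reward_frames m : total_reward (m * T)%N = total_reward T *+ m.
Proof.
elim: m => [|m IH]; first by rewrite mul0n /total_reward big_geq.
rewrite mulSn /total_reward (big_cat_nat _ (leq_addr _ _)) //= -{2}[T]add0n big_addn addKn.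
rewrite (eq_bigr _ (fun i _ => slot_reward_shift i)).
by move: IH; rewrite /Defs.total_reward => ->; rewrite mulrS.
Qed.

End PolicyRewards.

Lemma period_execs_modn (S : finType) (tau : S -> nat) (g : nat -> option S) (T : nat) X K :
  (K * tau X + tau X <= T)%N ->
  period_execs tau (fun u => g (u %% T)%N) X K =
    (\sum_(K * tau X <= t < K * tau X + tau X) (g t == Some X))%N.
Proof.
by move=> KT; apply: eq_big_nat => t /andP[_ tK]; rewrite modn_small // (leq_trans tK).
Qed.

Lemma frame_gt0 (S : finType) (tau : S -> nat) : (forall X, 0 < tau X)%N -> (0 < frame tau)%N.
Proof. by move=> tau_gt0; rewrite /frame; elim/big_ind: _ => // x y; rewrite lcmn_gt0 => -> ->. Qed.

Lemma dvdn_frame (S : finType) (tau : S -> nat) X : (tau X %| frame tau)%N.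
Proof. exact: (biglcmn_sup X). Qed.

Lemma avg_reward_ge_frame_reward (R : realType) (S : finType) (tau : S -> nat)
    (r : S -> nat -> R) (p : policy S) (X : S) :
  (forall Y, 0 < tau Y)%N -> (forall i, (1 <= i <= tau X)%N -> 0 <= r X i) ->
  (forall u, p (u + frame tau)%N = p u) ->
  ((total_reward tau r p X (frame tau))%:E <= avg_reward tau r p X)%E.
Proof.
move=> tau_gt0 r_ge0 p_periodic; apply: liminf_ratio_ge; rewrite ?frame_gt0 ?total_reward_ge0 //.
move=> t; rewrite mulr_natl -total_reward_frames ?dvdn_frame //.
exact/total_reward_le/leq_divM.
Qed.

(** * Rearranging the rewards *)

Section PeriodRewards.

Variables (R : realType) (r : nat -> R) (tau : nat).

Lemma period_reward_le c c' : (forall i, (1 <= i <= tau)%N -> 0 <= r i) ->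
  (c <= c' <= tau)%N -> period_reward r c <= period_reward r c'.
Proof.
move=> r_ge0 /andP[cc' c'tau]; rewrite /period_reward [leRHS](@big_cat_nat _ _ _ c.+1) //=.
rewrite lerDl big_nat; apply: sumr_ge0 => i /andP[ci ic'].
by apply: r_ge0; rewrite (leq_trans _ ci) //= (leq_trans _ c'tau) // -ltnS.
Qed.

Lemma sum_period_rewards_ge (q P e : nat) (c : nat -> nat) (t : nat -> bool) :
  (forall i, (1 <= i <= tau)%N -> 0 <= r i) ->
  (forall k, (k < P)%N -> (q + t k <= c k <= tau)%N) -> (e <= \sum_(0 <= k < P) t k)%N ->
  P%:R * period_reward r q + e%:R * r q.+1 <= \sum_(0 <= k < P) period_reward r (c k).
Proof.
move=> r_ge0 qtc et.
apply: (@le_trans _ _ (\sum_(0 <= k < P) (period_reward r q + (t k)%:R * r q.+1))); last first.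
  apply: ler_sum_nat => k /andP[_ /qtc qtk]; apply: le_trans (period_reward_le r_ge0 qtk).
  case: (t k); rewrite ?mul0r ?addr0 ?addn0 // mul1r addn1.
  by rewrite [in leRHS]/period_reward big_nat_recr.
rewrite big_split /= sumr_const_nat subn0 -mulr_suml -natr_sum mulr_natl lerD2l.
have [q_lt|tau_le] := ltnP q tau.
  by apply: ler_wpM2r; [apply: r_ge0 | rewrite ler_nat].
have t0 : (\sum_(0 <= k < P) t k = 0)%N.
  by rewrite big_nat big1 // => k /andP[_ /qtc]; case: (t k) => //=; lia.
have /eqP e0 : e == 0%N by rewrite -leqn0 -t0.
by rewrite t0 e0.
Qed.

Hypothesis r_mono : forall i j, (1 <= i)%N -> (i <= j)%N -> (j <= tau)%N -> r j <= r i.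

(* Moving weight onto the q largest rewards, each by at most P, can only increase the
   total: the level c separates the rewards of rank <= q from the others. *)
Lemma weighted_rewards_exchange (n : nat -> nat) (P q : nat) (c : R) :
  (forall i, (1 <= i <= tau)%N -> (n i <= P)%N) ->
  (forall i, (1 <= i <= q)%N -> c <= r i) -> (forall i, (q < i <= tau)%N -> r i <= c) ->
  (q <= tau)%N ->
  \sum_(1 <= i < tau.+1) (n i)%:R * r i <=
  P%:R * period_reward r q + ((\sum_(1 <= i < tau.+1) n i)%:R - (P * q)%:R) * c.
Proof.
move=> nP c_le le_c q_le.
have -> : \sum_(1 <= i < tau.+1) (n i)%:R * r i =
    \sum_(1 <= i < tau.+1) (n i)%:R * (r i - c) + (\sum_(1 <= i < tau.+1) n i)%:R * c.
  by rewrite natr_sum mulr_suml -big_split /=; apply: eq_bigr => i _; ring.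
suff : \sum_(1 <= i < tau.+1) (n i)%:R * (r i - c) <= P%:R * period_reward r q - (P * q)%:R * c.
  by rewrite mulrBl; lra.
have -> : P%:R * period_reward r q - (P * q)%:R * c =
    \sum_(1 <= i < tau.+1) (if (i <= q)%N then P%:R * (r i - c) else 0).
  rewrite [RHS](@big_cat_nat _ _ _ q.+1) //= [X in _ = _ + X]big1_seq ?addr0; last first.
    by move=> i /andP[_]; rewrite mem_index_iota => /andP[qi _]; rewrite leqNgt qi.
  rewrite (eq_big_nat _ _ (F2 := fun i => P%:R * (r i - c))); last by move=> i /andP[_]; rewrite ltnS => ->.
  by rewrite -mulr_sumr sumrB sumr_const_nat subn1 /= natrM /period_reward; ring.
apply: ler_sum_nat => i /andP[i1 i_tau]; rewrite ltnS in i_tau.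
case: ifP => iq.
  by apply: ler_wpM2r; [rewrite subr_ge0 c_le ?i1 | rewrite ler_nat nP ?i1].
by rewrite mulr_ge0_le0 // subr_le0 le_c // ltnNge iq.
Qed.

Lemma weighted_rewards_le (n : nat -> nat) (P q e : nat) :
  (forall i, (1 <= i <= tau)%N -> (n i <= P)%N) ->
  (\sum_(1 <= i < tau.+1) n i = q * P + e)%N -> (e < P)%N ->
  \sum_(1 <= i < tau.+1) (n i)%:R * r i <= P%:R * period_reward r q + e%:R * r q.+1.
Proof.
move=> nP Msum eP.
have M_le : (q * P + e <= tau * P)%N.
  rewrite -Msum; apply: (@leq_trans (\sum_(1 <= i < tau.+1) P)); last by rewrite sum_nat_const_nat subn1.
  by rewrite big_nat [leqRHS]big_nat; apply: leq_sum => i; apply: nP.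
have q_le : (q <= tau)%N by nia.
have [q_lt|tau_le] := ltnP q tau.
  have := @weighted_rewards_exchange n P q (r q.+1) nP.
  rewrite Msum natrD mulnC addrAC subrr add0r; apply=> // i /andP[i_lo i_hi].
    exact: r_mono i_lo (leqW i_hi) q_lt.
  exact: r_mono i_hi.
have e0 : e = 0%N by nia.
have := @weighted_rewards_exchange n P q (r tau) nP.
rewrite Msum e0 addn0 mulnC subrr mul0r addr0 mul0r addr0; apply=> // i /andP[i_lo i_hi].
  by apply: r_mono i_lo _ (leqnn _); rewrite (leq_trans i_hi).
by rewrite leqNgt (leq_ltn_trans tau_le) in i_hi.
Qed.

End PeriodRewards.

Theorem theorem3 (R : realType) (S : finType) (tau : S -> nat)
  (r : S -> nat -> R) (n : S -> nat -> nat)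
  (tau_pos : forall X, (0 < tau X)%N)
  (r_mono : forall X i j, (1 <= i)%N -> (i <= j)%N -> (j <= tau X)%N -> r X j <= r X i)
  (r_nonneg : forall X, 0 <= r X (tau X))
  (n_bound : forall X i, (1 <= i <= tau X)%N -> (n X i <= frame tau %/ tau X)%N)
  (n_sum : (\sum_(X : S) \sum_(1 <= i < (tau X).+1) n X i <= frame tau)%N) :
  exists p : policy S, forall X : S,
    ((\sum_(1 <= i < (tau X).+1) (n X i)%:R * r X i)%:E <= avg_reward tau r p X)%E.
Proof.
set T := frame tau.
pose P X := (T %/ tau X)%N.
pose q X := ((\sum_(1 <= i < (tau X).+1) n X i) %/ P X)%N.
pose e X := ((\sum_(1 <= i < (tau X).+1) n X i) %% P X)%N.
have P_tau X : (P X * tau X = T)%N by rewrite divnK ?dvdn_frame.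
have e_lt_P X : (e X < P X)%N.
  by rewrite ltn_pmod // divn_gt0 // (dvdn_leq (frame_gt0 tau_pos) (dvdn_frame tau X)).
have demand_le : (\sum_X (q X * P X + e X) <= T)%N.
  by rewrite (eq_bigr _ (fun X _ => esym (divn_eq _ (P X)))).
have [f f_matching] := hall_marriage (inl ord0) (demand_hall_condition tau_pos P_tau e_lt_P demand_le).
exists (fun u => matched_task P q f (u %% T)) => X.
have r_ge0 i : (1 <= i <= tau X)%N -> 0 <= r X i.
  by case/andP=> i1 i_le; apply: le_trans (r_nonneg X) (r_mono X _ _ i1 i_le (leqnn _)).
apply: le_trans (avg_reward_ge_frame_reward tau_pos r_ge0 _); last by move=> u; rewrite modnDr.
rewrite lee_fin (le_trans (weighted_rewards_le (r_mono X) (n_bound X) (divn_eq _ _) (e_lt_P X))) //.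
rewrite -[Z in total_reward _ _ _ _ Z](P_tau X) total_reward_periods //.
apply: (sum_period_rewards_ge r_ge0 _ (optional_slots_ge tau_pos P_tau e_lt_P demand_le f_matching X)).
move=> k kP; rewrite period_execs_le andbT period_execs_modn.
  exact: matched_execs_ge.
by rewrite -mulSnr -(P_tau X) leq_mul2r kP orbT.
Qed.
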